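(* For any positive integer $k$, in $\mathfrak{h}^1_t[[u]]$, $$\frac{1}{1-z_ku}=\exp_{\ast_t}\left(\sum_{n=1}^\infty\frac1n d_n(t)z_{nk}u^n\right).$$ In particular, if $k\ge2$, $$1+\sum_{n=1}^\infty\zeta^t(\{k\}^n)u^n=\exp\left(\sum_{n=1}^\infty\frac1nd_n(t)\zeta(nk)u^n\right).$$
   Context: $u$ is a variable commuting with everything; $d_n(t)=t^n-(t-1)^n$; $\{k\}^n$ is $n$ repetitions of $k$. $\mathfrak{h}_t=\mathbb{Q}[t]\langle x,y\rangle$, $\mathfrak{h}^1_t=\mathbb{Q}[t]+\mathfrak{h}_ty$, $z_k=x^{k-1}y$, $\frac1{1-z_ku}=\sum_{n\ge0}z_k^nu^n$ (concatenation powers). For a word $w$, $\delta(w)=1$ if $w=1$, else $0$. The $t$-harmonic product $\ast_t$ on $\mathfrak{h}^1_t$ is the commutative, associative $\mathbb{Q}[t]$-bilinear product with $1\ast_t w=w\ast_t1=w$ and $z_kw_1\ast_t z_lw_2=z_k(w_1\ast_t z_lw_2)+z_l(z_kw_1\ast_t w_2)+(1-2t)z_{k+l}(w_1\ast_t w_2)+[1-\delta(w_1)\delta(w_2)](t^2-t)x^{k+l}(w_1\ast_t w_2)$ for words $w_1,w_2\in\mathfrak{h}^1_t$; it is extended coefficientwise to power series in $u$, and $\exp_{\ast_t}(X)=\sum_{m\ge0}X^{\ast_t m}/m!$. For $k_1\ge2$, $\zeta(k_1,\ldots,k_n)=\sum_{m_1>\cdots>m_n>0}\prod m_j^{-k_j}$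 and $\zeta^t(k_1,\ldots,k_n)=\sum_{\mathbf p}t^{n-\mathrm{dep}(\mathbf p)}\zeta(\mathbf p)$, summed over sequences $\mathbf p$ obtained from $(k_1,\ldots,k_n)$ by replacing each separating comma by a comma or a plus sign ($\mathrm{dep}$ = length). *)

From HB Require Import structures.
From mathcomp Require Import all_boot all_order all_algebra.
From mathcomp Require Import all_classical all_reals all_analysis.
Set Implicit Arguments. Unset Strict Implicit. Unset Printing Implicit Defensive.
Import Order.TTheory GRing.Theory Num.Theory numFieldNormedType.Exports.
Local Open Scope ring_scope.

(* A word of h^1_t, z_{k1} ... z_{kn} (z_k = x^(k-1) y), is represented by
   its index sequence [:: k1; ...; kn] (the empty sequence is the word 1). *)
Definition word := seq nat.

(* An element of h^1_t as a formal Q[t]-linear combination of words;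
   two combinations are equal iff they have the same coefficients (lccoef). *)
Definition lc := seq ({poly rat} * word).

Definition lccoef (A : lc) (w : word) : {poly rat} :=
  \sum_(a <- A | a.2 == w) a.1.

Definition lcons (k : nat) (A : lc) : lc := [seq (a.1, k :: a.2) | a <- A].
(* x^j . A, using x^j z_m w = z_(j+m) w (only applied to combinations of
   nonempty words) *)
Definition lprepx (j : nat) (A : lc) : lc :=
  [seq (a.1, if a.2 is m :: w then (j + m)%N :: w else a.2) | a <- A].
Definition lscale (c : {poly rat}) (A : lc) : lc := [seq (c * a.1, a.2) | a <- A].

Fixpoint tharm (w1 w2 : word) {struct w1} : lc :=
  match w1 with
  | [::] => [:: (1, w2)]
  | k :: w1' =>
    let fix aux (w2 : word) : lc :=
      match w2 with
      | [::] => [:: (1, k :: w1')]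
      | l :: w2' =>
          lcons k (tharm w1' w2) ++ lcons l (aux w2')
          ++ lcons (k + l)%N (lscale (1 - 'X *+ 2) (tharm w1' w2'))
          ++ (if (w1' == [::]) && (w2' == [::]) then [::]
              else lprepx (k + l)%N (lscale ('X ^+ 2 - 'X) (tharm w1' w2')))
      end in aux w2
  end.

Definition lcmul (A B : lc) : lc :=
  flatten [seq [seq (a.1 * b.1 * c.1, c.2) | c <- tharm a.2 b.2] | a <- A, b <- B].

(* power series in u with coefficients in h^1_t: coefficient of u^N *)
Definition hps := nat -> lc.
Definition hps_mul (F G : hps) : hps := fun N =>
  flatten [seq lcmul (F i) (G (N - i)%N) | i <- iota 0 N.+1].
Definition hps_one : hps := fun N => if N == 0%N then [:: (1, [::])] else [::].
Definition hps_pow (F : hps) (m : nat) : hps := iter m (hps_mul F) hps_one.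
Definition hps_exp_trunc (M : nat) (F : hps) : hps := fun N =>
  flatten [seq lscale ((m`!)%:R^-1)%:P (hps_pow F m N) | m <- iota 0 M.+1].

Definition dpoly (R : nzRingType) (n : nat) : {poly R} := 'X ^+ n - ('X - 1) ^+ n.

Definition geom_z (k : nat) : hps := fun N => [:: (1, nseq N k)].
Definition logX (k : nat) : hps := fun N =>
  if N == 0%N then [::] else [:: (((N%:R)^-1)%:P * dpoly rat N, [:: (N * k)%N])].

Fixpoint zeta_trunc (R : realType) (M : nat) (ks : seq nat) : R :=
  match ks with
  | [::] => 1
  | k :: ks' => \sum_(1 <= m < M) ((m%:R : R) ^- k) * zeta_trunc R m ks'
  end.

Definition mzv (R : realType) (ks : seq nat) : R :=
  limn (fun M => zeta_trunc R M ks).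

(* all sequences obtained from ks by replacing each comma by "," or "+" *)
Fixpoint compl (ks : seq nat) : seq (seq nat) :=
  match ks with
  | [::] => [:: [::]]
  | [:: k] => [:: [:: k]]
  | k :: ks' =>
      [seq k :: p | p <- compl ks'] ++
      [seq (k + head 0%N p)%N :: behead p | p <- compl ks']
  end.

Definition zetat (R : realType) (ks : seq nat) : {poly R} :=
  \sum_(p <- compl ks) 'X ^+ (size ks - size p) * (mzv R p)%:P.

Definition ps_mul (A : comNzRingType) (F G : nat -> A) : nat -> A := fun N =>
  \sum_(i < N.+1) F i * G (N - i)%N.
Definition ps_one (A : comNzRingType) : nat -> A := fun N => if N == 0%N then 1 else 0.
Definition ps_pow (A : comNzRingType) (F : nat -> A) (m : nat) : nat -> A :=
  iter m (ps_mul F) (@ps_one A).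

Definition zlog (R : realType) (k : nat) : nat -> {poly R} := fun N =>
  if N == 0%N then 0 else ((N%:R)^-1)%:P * dpoly R N * (mzv R [:: (N * k)%N])%:P.
Definition ps_exp_trunc (R : realType) (M : nat) (F : nat -> {poly R}) : nat -> {poly R} :=
  fun N => \sum_(m < M.+1) ((m`!)%:R^-1)%:P * ps_pow F m N.

(* Both identities follow from one uniqueness principle.  Let T_n be commuting
   operators and c_0 = 0.  The coefficients of exp(\sum_n c_n u^n T_n) e satisfy
   Y_0 = e and N Y_N = \sum_(n <= N) n c_n T_n Y_(N-n) (the coefficientwise form
   of u Y' = (\sum_n n c_n u^n T_n) Y), and this recursion determines Y.

   For 1/(1 - z_k u), T_n is multiplication by z_(nk) for *_t (these commute
   because *_t is commutative and associative) and c_n = d_n(t)/n; the recursion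
   is the Newton-type identity N z_k^N = \sum_n d_n(t) z_(nk) *_t z_k^(N-n),
   a consequence of d_(n+2) + (1-2t) d_(n+1) + (t^2-t) d_n = 0.  Elements of
   h^1_t are handled through Q[t]-linear functionals on words.

   For zeta^t, the sum over indices below M of 1 + \sum_n zeta^t({k}^n) u^n is
   the product over 0 < m < M of (1 - (t-1) m^-k u) / (1 - t m^-k u), whose
   factors have logarithm \sum_n d_n(t) m^(-nk) u^n / n.  Logarithmic
   derivatives add up along products, so the truncation satisfies the recursion
   with c_n = d_n(t) zeta_M(nk) / n, and the identity follows coefficientwise as
   M tends to infinity. *)

From HB Require Import structures.
From mathcomp Require Import all_boot all_order all_algebra.
From mathcomp Require Import all_classical all_reals all_analysis.
From mathcomp Require Import ring lra zify.
Import Order.TTheory GRing.Theory Num.Theory numFieldNormedType.Exports.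
Local Open Scope ring_scope.

(** * Exponentials of commuting operators *)

Lemma sum_triangle_swap (A : nmodType) (f : nat -> nat -> A) N :
  \sum_(0 <= i < N.+1) \sum_(0 <= n < (N - i).+1) f i n =
  \sum_(0 <= n < N.+1) \sum_(0 <= i < (N - n).+1) f i n.
Proof.
have widen (g : nat -> nat -> A) :
    \sum_(0 <= i < N.+1) \sum_(0 <= n < (N - i).+1) g i n =
    \sum_(0 <= i < N.+1) \sum_(0 <= n < N.+1 | (i + n <= N)%N) g i n.
  apply: eq_big_nat => i /andP[_ ltiN].
  rewrite (@big_nat_widen _ _ _ 0 (N - i).+1 N.+1) /=; last by lia.
  by apply: eq_bigl => n; apply/idP/idP; lia.
rewrite widen (widen (fun n i => f i n)) (exchange_big_dep_nat predT) //=.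
by apply: eq_bigr => n _; apply: eq_bigl => i; rewrite addnC.
Qed.

Lemma sum_subn_eq0 (A : pzSemiRingType) (f g : nat -> A) N :
  \sum_(0 <= i < N.+1) f i * ((N - i == 0)%N%:R * g i) = f N * g N.
Proof.
rewrite big_nat_recr //= subnn mul1r big1_seq ?add0r // => i.
rewrite mem_index_iota => /andP[_ /andP[_ ltiN]].
by rewrite subn_eq0 leqNgt ltiN mul0r mulr0.
Qed.

Lemma fact_inv_natr (F : numFieldType) m :
  ((m.+1`!)%:R^-1)%:P * m.+1%:R = ((m`!)%:R^-1)%:P :> {poly F}.
Proof.
by rewrite -polyC_natr -polyCM factS natrM invfM mulrAC mulVf ?mul1r ?pnatr_eq0.
Qed.

Section OperatorExponential.
Variables (F : numFieldType) (V : Type).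
Variables (c : nat -> {poly F}) (T : nat -> V -> V) (e : V -> {poly F}).
Hypothesis c0 : c 0%N = 0.
Hypothesis T_comm : forall i j G, T i (T j G) = T j (T i G).

(* [opow m N G] is the coefficient of u^N in (\sum_i c_i u^i T_i)^m e, evaluated
   at G, where T_i acts on functions V -> {poly F} by precomposition. *)
Fixpoint opow (m N : nat) (G : V) : {poly F} :=
  if m is m'.+1 then \sum_(0 <= i < N.+1) c i * opow m' (N - i) (T i G)
  else (N == 0%N)%:R * e G.

Definition oexp (M N : nat) (G : V) : {poly F} :=
  \sum_(0 <= m < M.+1) ((m`!)%:R^-1)%:P * opow m N G.

Definition exp_ode (Y : nat -> V -> {poly F}) : Prop :=
  (forall G, Y 0%N G = e G) /\
  (forall N G, N%:R * Y N G = \sum_(0 <= n < N.+1) n%:R * c n * Y (N - n)%N (T n G)).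

Lemma opowS m N G :
  opow m.+1 N G = \sum_(0 <= i < N.+1) c i * opow m (N - i) (T i G).
Proof. by []. Qed.

Lemma opow_eq0 m N G : (N < m)%N -> opow m N G = 0.
Proof.
elim: m N G => [|m IH] N G //= ltNm.
rewrite big1_seq // => -[|i]; first by rewrite c0 mul0r.
by rewrite mem_index_iota => /andP[_ /andP[_ ltiN]]; rewrite IH ?mulr0 //; lia.
Qed.

Lemma opow_ode m N G : N%:R * opow m.+1 N G =
  m.+1%:R * \sum_(0 <= n < N.+1) n%:R * c n * opow m (N - n) (T n G).
Proof.
elim: m N G => [|m IH] N G.
  rewrite mul1r /= mulr_sumr.
  by rewrite (eq_bigr _ (fun i _ => mulrA _ _ _)) !sum_subn_eq0.
have split_N i : (0 <= i < N.+1)%N -> N%:R * (c i * opow m.+1 (N - i) (T i G)) =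
    i%:R * c i * opow m.+1 (N - i) (T i G) +
    m.+1%:R * \sum_(0 <= n < (N - i).+1)
      c i * (n%:R * c n * opow m (N - i - n) (T n (T i G))).
  rewrite ltnS => /andP[_ leiN].
  rewrite -{1}(subnKC leiN) natrD mulrDl mulrA; congr (_ + _).
  by rewrite mulrCA IH [in LHS]mulrCA -mulr_sumr.
rewrite opowS mulr_sumr (eq_big_nat _ _ split_N) big_split /= -mulr_sumr.
rewrite sum_triangle_swap.
rewrite [X in _ + _ * X](eq_bigr (fun n => n%:R * c n * opow m.+1 (N - n) (T n G))).
  by rewrite -[m.+2]addn1 natrD mulrDl mul1r addrC.
move=> n _; rewrite opowS mulr_sumr; apply: eq_bigr => i _.
by rewrite mulrCA subnAC T_comm.
Qed.

Lemma oexp_trunc M N G : (N <= M)%N -> oexp M N G = oexp N N G.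
Proof.
move=> leNM; rewrite /oexp (big_cat_nat _ (n := N.+1)) //= [X in _ + X]big1_seq ?addr0 //.
by move=> m; rewrite mem_index_iota => /andP[_ /andP[ltNm _]]; rewrite opow_eq0 ?mulr0.
Qed.

Lemma oexp_ode : exp_ode (fun N => oexp N N).
Proof.
split=> [G|[|N] G]; first by rewrite /oexp big_nat1 /= fact0 invr1 mul1r mul1r.
  by rewrite mul0r big_nat1 !mul0r.
rewrite /oexp big_nat_recl // mulrDr [opow 0 _ _]/= mul0r !mulr0 add0r mulr_sumr.
rewrite (eq_bigr (fun m => \sum_(0 <= n < N.+2) n%:R * c n *
    (((m`!)%:R^-1)%:P * opow m (N.+1 - n) (T n G)))); last first.
  move=> m _; rewrite mulrCA opow_ode mulrA fact_inv_natr mulr_sumr.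
  by apply: eq_bigr => n _; rewrite mulrCA.
rewrite exchange_big /=; apply: eq_big_nat => -[|n] _.
  by rewrite !mul0r big1 // => m _; rewrite mul0r.
rewrite -mulr_sumr; congr (_ * _); apply: (@oexp_trunc N); lia.
Qed.

Lemma exp_ode_uniq Y Z : exp_ode Y -> exp_ode Z -> forall N G, Y N G = Z N G.
Proof.
move=> [Y0 Yode] [Z0 Zode] N; elim/ltn_ind: N => -[|N] IH G; first by rewrite Y0 Z0.
apply: (@mulfI _ N.+1%:R); first by rewrite -polyC_natr polyC_eq0 pnatr_eq0.
rewrite Yode Zode; apply: eq_big_nat => -[|n] /andP[_ ltnN]; first by rewrite !mul0r.
by rewrite IH //; lia.
Qed.

Lemma exp_ode_oexp Y N M G : exp_ode Y -> (N <= M)%N -> Y N G = oexp M N G.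
Proof.
by move=> Yode leNM; rewrite oexp_trunc // (exp_ode_uniq _ _ Yode oexp_ode).
Qed.

End OperatorExponential.

Arguments opow {F V} c T e m N G.
Arguments oexp {F V} c T e M N G.
Arguments exp_ode {F V} c T e Y.
Arguments exp_ode_oexp {F V c T e} c0 T_comm {Y N M G}.

Section DPoly.
Context {R : comNzRingType}.

Lemma dpoly0 : dpoly R 0 = 0.
Proof. by rewrite /dpoly !expr0 subrr. Qed.

Lemma dpoly1 : dpoly R 1 = 1.
Proof. by rewrite /dpoly !expr1 opprB addrC subrK. Qed.

Lemma dpoly_rec j :
  dpoly R j.+2 + (1 - 'X *+ 2) * dpoly R j.+1 + ('X^2 - 'X) * dpoly R j = 0.
Proof. rewrite /dpoly !exprS; ring. Qed.

Lemma dpoly_rec_sum (H : nat -> {poly R}) N :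
  \sum_(0 <= n < N.+2) dpoly R n * H n
  + (1 - 'X *+ 2) * \sum_(0 <= n < N.+1) dpoly R n * H n.+1
  + ('X^2 - 'X) * \sum_(0 <= n < N) dpoly R n * H n.+2 = H 1%N.
Proof.
rewrite (big_nat_recl N.+1) // (big_nat_recl N) // (big_nat_recl N) //.
rewrite dpoly0 dpoly1 !mul0r mul1r !add0r !mulr_sumr -!addrA -!big_split /=.
rewrite big1_seq ?addr0 // => n _.
by rewrite !mulrA -mulrDl -mulrDl addrA dpoly_rec mul0r.
Qed.

Lemma dpoly_sum_X N :
  \sum_(0 <= n < N.+1) dpoly R n * 'X^(N - n) + dpoly R N.+1 = N.+1%:R * 'X^N.
Proof.
elim: N => [|N IH]; first by rewrite big_nat1 dpoly0 dpoly1 mul0r add0r mul1r.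
rewrite big_nat_recr //= subnn expr0 mulr1.
have -> : \sum_(0 <= n < N.+1) dpoly R n * 'X^(N.+1 - n) =
          'X * (N.+1%:R * 'X^N - dpoly R N.+1).
  rewrite -IH addrK mulr_sumr; apply: eq_big_nat => n /andP[_ ltnN].
  by rewrite subSn // exprS mulrCA.
rewrite /dpoly !exprS -!natr1; ring.
Qed.

End DPoly.

Definition dlog (F : numFieldType) (n : nat) : {poly F} :=
  if n == 0%N then 0 else ((n%:R)^-1)%:P * dpoly F n.

Lemma dlog0 (F : numFieldType) : dlog F 0 = 0.
Proof. by []. Qed.

Lemma natr_mul_dlog (F : numFieldType) n : n%:R * dlog F n = dpoly F n.
Proof.
rewrite /dlog; case: eqP => [->|/eqP n0]; first by rewrite mulr0 dpoly0.
by rewrite mulrA -polyC_natr -polyCM mulfV ?mul1r ?pnatr_eq0.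
Qed.

(** * The t-harmonic product and the geometric series *)

Definition lc_eval (f : word -> {poly rat}) (A : lc) : {poly rat} :=
  \sum_(a <- A) a.1 * f a.2.

Definition xprep (j : nat) (v : word) : word :=
  if v is m :: w then (j + m)%N :: w else v.

Section LcEval.
Implicit Types (f g : word -> {poly rat}) (A B : lc).

Lemma lc_eval_nil f : lc_eval f [::] = 0.
Proof. by rewrite /lc_eval big_nil. Qed.

Lemma lc_eval_cons f a A : lc_eval f (a :: A) = a.1 * f a.2 + lc_eval f A.
Proof. by rewrite /lc_eval big_cons. Qed.

Lemma lc_eval_cat f A B : lc_eval f (A ++ B) = lc_eval f A + lc_eval f B.
Proof. by rewrite /lc_eval big_cat. Qed.

Lemma lc_eval_flatten f (L : seq lc) :
  lc_eval f (flatten L) = \sum_(A <- L) lc_eval f A.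
Proof.
elim: L => [|A L IH]; first by rewrite big_nil lc_eval_nil.
by rewrite /= lc_eval_cat IH big_cons.
Qed.

Lemma lc_eval_lcons f k A : lc_eval f (lcons k A) = lc_eval (fun v => f (k :: v)) A.
Proof. by rewrite /lc_eval big_map. Qed.

Lemma lc_eval_lscale f c A : lc_eval f (lscale c A) = c * lc_eval f A.
Proof. by rewrite /lc_eval big_map mulr_sumr; apply: eq_bigr => a _; rewrite mulrA. Qed.

Lemma lc_evalD f g A : lc_eval (fun v => f v + g v) A = lc_eval f A + lc_eval g A.
Proof. by rewrite /lc_eval -big_split; apply: eq_bigr => a _; rewrite mulrDr. Qed.

Lemma lc_evalMl c f A : lc_eval (fun v => c * f v) A = c * lc_eval f A.
Proof. by rewrite /lc_eval mulr_sumr; apply: eq_bigr => a _; rewrite mulrCA. Qed.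

Lemma lccoef_eval A w : lccoef A w = lc_eval (fun v => (v == w)%:R) A.
Proof.
rewrite /lccoef /lc_eval big_mkcond; apply: eq_bigr => a _.
by case: eqP; rewrite ?mulr1 ?mulr0.
Qed.

Lemma lc_eval_lcmul f A B : lc_eval f (lcmul A B) =
  \sum_(a <- A) \sum_(b <- B) a.1 * b.1 * lc_eval f (tharm a.2 b.2).
Proof.
rewrite lc_eval_flatten big_flatten big_map; apply: eq_bigr => a _.
rewrite big_map; apply: eq_bigr => b _.
by rewrite /lc_eval big_map mulr_sumr; apply: eq_bigr => x _; rewrite mulrA.
Qed.

End LcEval.

Definition lmulz (a : nat) (f : word -> {poly rat}) (v : word) : {poly rat} :=
  lc_eval f (tharm [:: a] v).

Section LeftMultiplication.
Implicit Types (f g : word -> {poly rat}).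

Lemma lmulz_nil a f : lmulz a f [::] = f [:: a].
Proof. by rewrite /lmulz /= lc_eval_cons lc_eval_nil mul1r addr0. Qed.

Lemma lmulz_cons a f l w : lmulz a f (l :: w) =
  f [:: a, l & w] + lmulz a (fun u => f (l :: u)) w
  + (1 - 'X *+ 2) * f ((a + l)%N :: w)
  + (if w is [::] then 0 else ('X^2 - 'X) * f (xprep (a + l) w)).
Proof.
rewrite /lmulz /= lc_eval_cons lc_eval_cat lc_eval_lcons lc_eval_cons mul1r mulr1.
rewrite -!addrA.
congr (_ + (_ + _)); congr (_ + _); case: w => [|m w] /=; first by rewrite lc_eval_nil.
by rewrite lc_eval_cons lc_eval_nil addr0 mulr1.
Qed.

Lemma lmulz_eq_nonempty a f g w :
  (forall u, u != [::] -> f u = g u) -> lmulz a f w = lmulz a g w.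
Proof.
elim: w f g => [|l w IH] f g fg; first by rewrite !lmulz_nil fg.
rewrite !lmulz_cons (IH _ (fun u => g (l :: u))) => [|u _]; last exact: fg.
by case: w {IH} => [|m w]; rewrite !fg.
Qed.

Lemma lmulz_lmulz_cons a b f l w : lmulz a (fun u => lmulz b f (l :: u)) w =
  lmulz a (fun u => f [:: b, l & u]) w + lmulz a (lmulz b (fun u => f (l :: u))) w
  + (1 - 'X *+ 2) * lmulz a (fun u => f ((b + l)%N :: u)) w
  + ('X^2 - 'X) * lmulz a (fun u => f (xprep (b + l) u)) w.
Proof.
rewrite (@lmulz_eq_nonempty _ _
  (fun u => f [:: b, l & u] + lmulz b (fun u => f (l :: u)) u
   + (1 - 'X *+ 2) * f ((b + l)%N :: u) + ('X^2 - 'X) * f (xprep (b + l) u))).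
  by rewrite /lmulz !lc_evalD !lc_evalMl.
by move=> [|m u] // _; rewrite lmulz_cons.
Qed.

Lemma xprepD i j v : xprep i (xprep j v) = xprep (i + j) v.
Proof. by case: v => [|m v] //=; rewrite addnA. Qed.

Lemma lmulz_comm a b f : lmulz a (lmulz b f) = lmulz b (lmulz a f).
Proof.
apply: funext => v; elim: v f => [|l w IH] f.
  by rewrite !lmulz_nil !lmulz_cons !lmulz_nil addnC; ring.
rewrite [lmulz a _ (l :: w)]lmulz_cons [lmulz b _ (l :: w)]lmulz_cons !lmulz_lmulz_cons IH.
move: (lmulz b (lmulz a (fun u => f (l :: u))) w) => X.
have Eab : (b + l + a = a + b + l)%N by lia.
have Eba : (a + l + b = a + b + l)%N by lia.
case: w {IH} => [|m w]; rewrite ?lmulz_cons ?lmulz_nil /= ?xprepD !addnA.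
  all: by rewrite [(b + a)%N]addnC ?Eab ?Eba; ring.
Qed.

End LeftMultiplication.

Lemma lmulz_nseqS a f k M : lmulz a f (nseq M.+1 k) =
  f (a :: nseq M.+1 k) + lmulz a (fun u => f (k :: u)) (nseq M k)
  + (1 - 'X *+ 2) * f ((a + k)%N :: nseq M k)
  + (if M is M'.+1 then ('X^2 - 'X) * f ((a + k + k)%N :: nseq M' k) else 0).
Proof. by rewrite lmulz_cons; case: M. Qed.

(* The identity N z_k^N = \sum_n d_n(t) z_(nk) *_t z_k^(N-n) in h^1_t, tested against f. *)
Lemma newton_identity k N f : N%:R * f (nseq N k) =
  \sum_(0 <= n < N.+1) dpoly rat n * lmulz (n * k) f (nseq (N - n) k).
Proof.
elim: N f => [|N IH] f; first by rewrite big_nat1 dpoly0 !mul0r.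
pose H j := f ((j * k)%N :: nseq (N.+1 - j) k).
have expand n : (0 <= n < N.+1)%N ->
    dpoly rat n * lmulz (n * k) f (nseq (N.+1 - n) k) =
    dpoly rat n * H n
    + dpoly rat n * lmulz (n * k) (fun u => f (k :: u)) (nseq (N - n) k)
    + (1 - 'X *+ 2) * (dpoly rat n * H n.+1)
    + ('X^2 - 'X) * (dpoly rat n * (if (n < N)%N then H n.+2 else 0)).
  move=> /andP[_ ltnN]; rewrite subSn // lmulz_nseqS /H subSn // !subSS mulSnr.
  case E: (N - n)%N => [|M]; first by rewrite ltnNge -subn_eq0 E /= !mulr0 !addr0; ring.
  rewrite ifT; last by rewrite -subn_gt0 E.
  by rewrite subnS E succnK !mulSnr; ring.
rewrite big_nat_recr //= subnn lmulz_nil (eq_big_nat _ _ expand) !big_split /=.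
rewrite -IH -!mulr_sumr.
have -> : \sum_(0 <= n < N.+1) dpoly rat n * (if (n < N)%N then H n.+2 else 0) =
          \sum_(0 <= n < N) dpoly rat n * H n.+2.
  by rewrite big_nat_recr //= ltnn mulr0 addr0; apply: eq_big_nat => n /andP[_ ->].
have -> : f (k :: nseq N k) = H 1%N by rewrite /H mul1n subn1.
rewrite -(dpoly_rec_sum H N) (big_nat_recr N.+1) //= [H N.+1]/H subnn -natr1; ring.
Qed.

Lemma lc_eval_logX f k i B :
  lc_eval f (lcmul (logX k i) B) = dlog rat i * lc_eval (lmulz (i * k) f) B.
Proof.
rewrite lc_eval_lcmul /logX /dlog; case: eqP => _; first by rewrite big_nil mul0r.
rewrite big_cons big_nil addr0 mulr_sumr; apply: eq_bigr => b _ /=.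
by rewrite -mulrA.
Qed.

Section GeometricSeries.
Variable k : nat.

Let T i := lmulz (i * k).
Let e (f : word -> {poly rat}) := f [::].

Lemma lc_eval_hps_pow f m N :
  lc_eval f (hps_pow (logX k) m N) = opow (dlog rat) T e m N f.
Proof.
elim: m N f => [|m IH] N f.
  rewrite /= /hps_one; case: eqP => _; last by rewrite lc_eval_nil mul0r.
  by rewrite lc_eval_cons lc_eval_nil mul1r addr0.
rewrite /= /hps_mul lc_eval_flatten big_map; apply: eq_bigr => i _.
by rewrite lc_eval_logX IH.
Qed.

Lemma lc_eval_hps_exp f M N :
  lc_eval f (hps_exp_trunc M (logX k) N) = oexp (dlog rat) T e M N f.
Proof.
rewrite /hps_exp_trunc lc_eval_flatten big_map; apply: eq_bigr => m _.
by rewrite lc_eval_lscale lc_eval_hps_pow.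
Qed.

Lemma geom_exp_ode : exp_ode (dlog rat) T e (fun N f => f (nseq N k)).
Proof.
split=> [//|N f]; rewrite newton_identity; apply: eq_bigr => n _.
by rewrite natr_mul_dlog.
Qed.

Lemma geom_z_exp N M w : (N <= M)%N ->
  lccoef (geom_z k N) w = lccoef (hps_exp_trunc M (logX k) N) w.
Proof.
have T_comm i j f : T i (T j f) = T j (T i f) by rewrite /T lmulz_comm.
move=> leNM; rewrite !lccoef_eval lc_eval_hps_exp.
rewrite -(exp_ode_oexp (dlog0 _) T_comm geom_exp_ode leNM).
by rewrite lc_eval_cons lc_eval_nil mul1r addr0.
Qed.

End GeometricSeries.

(** * Power series and multiple zeta values *)

Section PowerSeries.
Context {A : comNzRingType}.
Implicit Types (L Y : nat -> A).

Lemma ps_mulE (Y Z : nat -> A) N :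
  ps_mul Y Z N = \sum_(0 <= i < N.+1) Y i * Z (N - i)%N.
Proof. by rewrite /ps_mul big_mkord. Qed.

Lemma ps_mulC (Y Z : nat -> A) N : ps_mul Y Z N = ps_mul Z Y N.
Proof.
rewrite !ps_mulE big_nat_rev; apply: eq_big_nat => i /andP[_ ltiN].
by rewrite add0n subSS subKn 1?mulrC.
Qed.

Definition ps_exp_ode L Y : Prop :=
  Y 0%N = 1 /\ forall N, N%:R * Y N = \sum_(0 <= n < N.+1) n%:R * L n * Y (N - n)%N.

Lemma ps_exp_ode0 : ps_exp_ode (fun=> 0) (@ps_one A).
Proof.
split=> // N; rewrite big1 => [|n _]; last by rewrite mulr0 mul0r.
by case: N => [|N]; rewrite /ps_one /= ?mul0r ?mulr0.
Qed.

Lemma ps_exp_odeM {L1 L2 Y1 Y2} : ps_exp_ode L1 Y1 -> ps_exp_ode L2 Y2 ->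
  ps_exp_ode (fun n => L1 n + L2 n) (ps_mul Y1 Y2).
Proof.
move=> [Y10 Y1ode] [Y20 Y2ode]; split; first by rewrite ps_mulE big_nat1 Y10 Y20 mulr1.
have mul_deriv L Y Z :
    (forall N, N%:R * Z N = \sum_(0 <= n < N.+1) n%:R * L n * Z (N - n)%N) ->
    forall N, \sum_(0 <= i < N.+1) Y i * ((N - i)%:R * Z (N - i)%N) =
    \sum_(0 <= n < N.+1) n%:R * L n * ps_mul Y Z (N - n).
  move=> Zode N; under eq_bigr do rewrite Zode mulr_sumr.
  rewrite sum_triangle_swap; apply: eq_bigr => n _.
  by rewrite ps_mulE mulr_sumr; apply: eq_bigr => i _; rewrite mulrCA subnAC.
move=> N; rewrite ps_mulE mulr_sumr.
have -> : \sum_(0 <= i < N.+1) N%:R * (Y1 i * Y2 (N - i)%N) =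
    \sum_(0 <= i < N.+1) Y2 i * ((N - i)%:R * Y1 (N - i)%N) +
    \sum_(0 <= i < N.+1) Y1 i * ((N - i)%:R * Y2 (N - i)%N).
  rewrite [X in X + _]big_nat_rev -big_split /=; apply: eq_big_nat => i /andP[_].
  rewrite ltnS => leiN.
  by rewrite add0n subSS subKn // -{1}(subnKC leiN) natrD; ring.
rewrite (mul_deriv _ _ _ Y1ode) (mul_deriv _ _ _ Y2ode) -big_split /=; apply: eq_bigr => n _.
by rewrite ps_mulC mulrDr mulrDl.
Qed.

End PowerSeries.

Section RealPowerSeries.
Context {R : realType}.
Implicit Types (L Y : nat -> {poly R}).

Lemma ps_pow_opow L m N :
  ps_pow L m N = opow L (fun _ => @id unit) (fun _ => 1) m N tt.
Proof.
elim: m N => [|m IH] N; first by rewrite /= /ps_one mulr1; case: eqP.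
rewrite opowS; transitivity (ps_mul L (ps_pow L m) N) => //.
by rewrite ps_mulE; apply: eq_bigr => i _; rewrite IH.
Qed.

Lemma ps_exp_ode_exp {L Y N M} : L 0%N = 0 -> ps_exp_ode L Y -> (N <= M)%N ->
  Y N = ps_exp_trunc M L N.
Proof.
move=> L0 [Y0 Yode] leNM.
have -> : ps_exp_trunc M L N = oexp L (fun _ => @id unit) (fun _ => 1) M N tt.
  by rewrite /ps_exp_trunc /oexp big_mkord; apply: eq_bigr => m _; rewrite ps_pow_opow.
have Yode' : exp_ode L (fun _ => @id unit) (fun _ => 1) (fun N _ => Y N).
  by split=> [_|n _]; [exact: Y0 | exact: Yode].
exact: (exp_ode_oexp (T := fun _ => @id unit) L0 (fun _ _ _ => erefl) Yode' leNM).
Qed.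

(* The coefficients of (1 - (t-1) y u) / (1 - t y u) = 1 + \sum_(j > 0) t^(j-1) y^j u^j. *)
Definition zfactor (y : R) (j : nat) : {poly R} :=
  if j == 0%N then 1 else 'X^(j.-1) * (y ^+ j)%:P.

Lemma zfactor_exp_ode y : ps_exp_ode (fun n => dlog R n * (y ^+ n)%:P) (zfactor y).
Proof.
split=> // -[|N]; first by rewrite big_nat1 !mul0r.
under eq_bigr do rewrite mulrA natr_mul_dlog.
rewrite big_nat_recr //= subnn mulr1.
have -> : \sum_(0 <= n < N.+1) dpoly R n * (y ^+ n)%:P * zfactor y (N.+1 - n) =
    (\sum_(0 <= n < N.+1) dpoly R n * 'X^(N - n)) * (y ^+ N.+1)%:P.
  rewrite mulr_suml; apply: eq_big_nat => n /andP[_ ltnN].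
  rewrite /zfactor subSn //= [in RHS](_ : N.+1 = n + (N - n).+1)%N; last by lia.
  by rewrite exprD polyCM; ring.
by rewrite -mulrDl dpoly_sum_X /zfactor /= mulrA.
Qed.

End RealPowerSeries.

Lemma compl_nseqS (A : nmodType) (f : seq nat -> A) k N :
  \sum_(p <- compl (nseq N.+1 k)) f p =
  \sum_(0 <= j < N.+1) \sum_(p <- compl (nseq (N - j) k)) f ((j.+1 * k)%N :: p).
Proof.
elim: N f => [|N IH] f; first by rewrite big_nat1 /= !big_cons !big_nil mul1n.
rewrite [compl _]/= big_cat !big_map (IH (fun p => f ((k + head 0%N p)%N :: behead p))).
by rewrite [RHS]big_nat_recl // subn0 mul1n.
Qed.

Lemma compl_size {ks p} : p \in compl ks -> (size p <= size ks)%N.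
Proof.
elim: ks p => [|a [|b ks] IH] p; try by rewrite inE => /eqP ->.
rewrite [compl _]/= mem_cat => /orP[] /mapP[q /IH leq ->] //=.
by rewrite size_behead ltnS (leq_trans (leq_pred _)).
Qed.

Lemma compl_all (P : pred nat) {ks p} :
  (forall a b, P a -> P b -> P (a + b)%N) -> all P ks -> p \in compl ks -> all P p.
Proof.
move=> PD; elim: ks p => [|a [|b ks] IH] p; try by move=> Pks; rewrite inE => /eqP ->.
move=> /= /andP[Pa Pks].
rewrite mem_cat => /orP[] /mapP[q /(IH _ Pks) Pq ->] /=; first by rewrite Pa.
by case: q Pq => [|c q] /=; [rewrite addn0 Pa | move=> /andP[Pc ->]; rewrite PD].
Qed.

Section TruncatedZetaT.
Variables (R : realType) (k : nat).

Lemma zeta_truncS M a p : (1 <= M)%N ->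
  zeta_trunc R M.+1 (a :: p) =
  zeta_trunc R M (a :: p) + ((M%:R : R) ^+ a)^-1 * zeta_trunc R M p.
Proof. by move=> M_gt0; rewrite /= big_nat_recr. Qed.

Lemma zeta_trunc_le1 M a p : (M <= 1)%N -> zeta_trunc R M (a :: p) = 0.
Proof. by move=> leM1; rewrite /= big_geq. Qed.

Definition zetat_trunc (M N : nat) : {poly R} :=
  \sum_(p <- compl (nseq N k)) 'X^(N - size p) * (zeta_trunc R M p)%:P.

Definition zlog_trunc (M n : nat) : {poly R} :=
  dlog R n * (zeta_trunc R M [:: (n * k)%N])%:P.

Lemma zetat_trunc0 M : zetat_trunc M 0 = 1.
Proof. by rewrite /zetat_trunc big_seq1 expr0 mul1r. Qed.

Lemma zetat_trunc_le1 M : (M <= 1)%N -> zetat_trunc M = @ps_one _.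
Proof.
move=> leM1; apply: funext => -[|N]; first exact: zetat_trunc0.
rewrite /zetat_trunc compl_nseqS big1 // => j _; rewrite big1 // => p _.
by rewrite zeta_trunc_le1 // mulr0.
Qed.

Lemma zetat_truncS M : (1 <= M)%N ->
  zetat_trunc M.+1 = ps_mul (zfactor ((M%:R : R) ^+ k)^-1) (zetat_trunc M).
Proof.
move=> M_gt0; apply: funext => -[|N].
  by rewrite ps_mulE big_nat1 !zetat_trunc0 mulr1.
rewrite ps_mulE big_nat_recl // subn0 /zfactor /= mul1r /zetat_trunc !compl_nseqS.
rewrite -big_split /=; apply: eq_big_nat => j /andP[_ ltjN].
rewrite subSS mulr_sumr -big_split /=; apply: eq_big_seq => p p_compl.
have := compl_size p_compl; rewrite size_nseq => sizep.
rewrite big_nat_recr //= polyCD mulrDr; congr (_ + _).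
rewrite polyCM mulrA -[(j.+1 * k)%N]mulnC exprM exprVn.
rewrite (_ : N.+1 - (size p).+1 = j + (N - j - size p))%N; last by lia.
by rewrite exprD; ring.
Qed.

Lemma zlog_truncS M : (1 <= M)%N ->
  zlog_trunc M.+1 =
  fun n => dlog R n * ((((M%:R : R) ^+ k)^-1) ^+ n)%:P + zlog_trunc M n.
Proof.
move=> M_gt0; apply: funext => n.
by rewrite /zlog_trunc zeta_truncS //= mulr1 polyCD mulrDr addrC exprVn -exprM mulnC.
Qed.

Lemma zlog_trunc_le1 M : (M <= 1)%N -> zlog_trunc M = fun=> 0.
Proof. by move=> leM1; apply: funext => n; rewrite /zlog_trunc zeta_trunc_le1 // mulr0. Qed.

Lemma zetat_trunc_exp_ode M : ps_exp_ode (zlog_trunc M) (zetat_trunc M).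
Proof.
elim: M => [|M IH].
  by rewrite zetat_trunc_le1 // zlog_trunc_le1 //; exact: ps_exp_ode0.
have [->|M_gt0] := posnP M.
  by rewrite zetat_trunc_le1 // zlog_trunc_le1 //; exact: ps_exp_ode0.
by rewrite zetat_truncS // zlog_truncS //; exact: ps_exp_odeM (zfactor_exp_ode _) IH.
Qed.

Lemma zetat_trunc_exp M {N K} : (N <= K)%N ->
  zetat_trunc M N = ps_exp_trunc K (zlog_trunc M) N.
Proof.
by apply: ps_exp_ode_exp (zetat_trunc_exp_ode M); rewrite /zlog_trunc dlog0 mul0r.
Qed.

End TruncatedZetaT.

(** * Coefficientwise limits *)

Section CoefficientwiseLimits.
Local Open Scope classical_set_scope.
Local Open Scope ring_scope.
Context {R : realType}.
Implicit Types (u v : nat -> {poly R}) (a b : {poly R}).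

Definition coef_cvg u a := forall i, (fun M => (u M)`_i) @ \oo --> a`_i.

Lemma cvg_sum (I : Type) (s : seq I) (P : pred I) (f : I -> nat -> R) (l : I -> R) :
  (forall i, P i -> f i @ \oo --> l i) ->
  (fun M => \sum_(i <- s | P i) f i M) @ \oo --> \sum_(i <- s | P i) l i.
Proof. by move=> fl; apply: cvg_big => //; exact: add_continuous. Qed.

Lemma coef_cvg_cst a : coef_cvg (fun=> a) a.
Proof. by move=> i; exact: cvg_cst. Qed.

Lemma coef_cvgC {x : nat -> R} {l : R} :
  x @ \oo --> l -> coef_cvg (fun M => (x M)%:P) l%:P.
Proof.
move=> xl i; rewrite coefC; under eq_fun do rewrite coefC.
by case: eqP => _; [exact: xl | exact: cvg_cst].
Qed.

Lemma coef_cvgM {u v a b} :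
  coef_cvg u a -> coef_cvg v b -> coef_cvg (fun M => u M * v M) (a * b).
Proof.
move=> ua vb i; rewrite coefM; under eq_fun do rewrite coefM.
by apply: cvg_sum => j _; exact: cvgM.
Qed.

Lemma coef_cvg_sum (I : eqType) (s : seq I)
    (u : I -> nat -> {poly R}) (l : I -> {poly R}) :
  (forall i, i \in s -> coef_cvg (u i) (l i)) ->
  coef_cvg (fun M => \sum_(i <- s) u i M) (\sum_(i <- s) l i).
Proof.
move=> ul j; rewrite coef_sum big_seq; under eq_fun do rewrite coef_sum big_seq.
by apply: cvg_sum => i /ul; apply.
Qed.

Lemma coef_cvg_uniq {u a b} : coef_cvg u a -> coef_cvg u b -> a = b.
Proof. by move=> ua ub; apply/polyP => i; exact: cvg_unique (ua i) (ub i). Qed.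

Lemma coef_cvg_ps_exp (L : nat -> nat -> {poly R}) (L' : nat -> {poly R}) K N :
  (forall n, coef_cvg (L^~ n) (L' n)) ->
  coef_cvg (fun M => ps_exp_trunc K (L M) N) (ps_exp_trunc K L' N).
Proof.
move=> LL'; apply: coef_cvg_sum => m _; apply: coef_cvgM; first exact: coef_cvg_cst.
elim: {m}(m : nat) N => [|m IH] N; first exact: coef_cvg_cst.
by apply: coef_cvg_sum => i _; exact: coef_cvgM.
Qed.

End CoefficientwiseLimits.

Section ZetaConvergence.
Local Open Scope classical_set_scope.
Local Open Scope ring_scope.
Context {R : realType}.

Lemma zeta_trunc_ge0 M p : 0 <= zeta_trunc R M p.
Proof.
elim: p M => [|a p IH] M /=; first exact: ler01.
by apply: sumr_ge0 => m _; rewrite mulr_ge0 // invr_ge0 exprn_ge0.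
Qed.

Lemma zeta_trunc_nondecr p M : zeta_trunc R M p <= zeta_trunc R M.+1 p.
Proof.
case: p => [|a p] //=; case: M => [|M]; first by rewrite !big_geq.
by rewrite [leRHS]big_nat_recr //= lerDl mulr_ge0 ?zeta_trunc_ge0 // invr_ge0 exprn_ge0.
Qed.

Lemma sum_inv_sqr_le n : \sum_(1 <= m < n.+1) ((m%:R : R) ^+ 2)^-1 <= 2 - 2 / n.+1%:R.
Proof.
elim: n => [|n IH]; first by rewrite big_geq // divr1 subrr.
rewrite big_nat_recr //= -[n.+2%:R]natr1.
move: IH; set x : R := n.+1%:R => IH.
have x_ge1 : 1 <= x by rewrite ler1n.
have telescope : (x ^+ 2)^-1 <= 2 / x - 2 / (x + 1).
  rewrite -subr_ge0 (_ : _ - _ = (x - 1) / (x ^+ 2 * (x + 1))).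
    by rewrite divr_ge0 ?mulr_ge0 ?sqr_ge0; lra.
  by field; apply/andP; split; apply/negP => /eqP; lra.
by apply: le_trans (lerD IH telescope) _; rewrite addrA subrK.
Qed.

Lemma zeta_trunc_le p M : all (leq 2) p -> zeta_trunc R M p <= 2 ^+ size p.
Proof.
elim: p M => [|a p IH] M /=; first by rewrite expr0.
move=> /andP[a_ge2 p_ge2]; rewrite exprS.
apply: (@le_trans _ _ (\sum_(1 <= m < M) ((m%:R : R) ^+ 2)^-1 * 2 ^+ size p)).
  apply: ler_sum_nat => m /andP[m_gt0 _].
  rewrite ler_pM ?invr_ge0 ?exprn_ge0 ?zeta_trunc_ge0 ?IH //.
  by rewrite lef_pV2 ?posrE ?exprn_gt0 ?ltr0n // ler_weXn2l // ler1n.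
rewrite -mulr_suml mulrC [leRHS]mulrC ler_wpM2l ?exprn_ge0 //.
case: M => [|n]; first by rewrite big_geq.
by apply: le_trans (sum_inv_sqr_le n) _; rewrite lerBlDr lerDl divr_ge0.
Qed.

Lemma zeta_trunc_cvg p : all (leq 2) p -> (zeta_trunc R)^~ p @ \oo --> mzv R p.
Proof.
move=> p_ge2; apply: nondecreasing_is_cvgn.
  exact/nondecreasing_seqP/zeta_trunc_nondecr.
by exists (2 ^+ size p) => _ [M _ <-]; exact: zeta_trunc_le.
Qed.

End ZetaConvergence.

Lemma zetat_exp (R : realType) k N M : (2 <= k)%N -> (N <= M)%N ->
  (if N == 0%N then 1 else zetat R (nseq N k)) = ps_exp_trunc M (zlog R k) N.
Proof.
move=> k_ge2 leNM.
have -> : (if N == 0%N then 1 else zetat R (nseq N k)) =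
    \sum_(p <- compl (nseq N k)) 'X^(N - size p) * (mzv R p)%:P.
  case: N {leNM} => [|N]; last by rewrite /zetat size_nseq.
  by rewrite big_seq1 /mzv lim_cst // expr0 mul1r.
apply: (coef_cvg_uniq (u := (zetat_trunc R k)^~ N)).
  apply: coef_cvg_sum => p p_compl.
  apply: coef_cvgM; first exact: coef_cvg_cst.
  apply: coef_cvgC; apply: zeta_trunc_cvg.
  by apply: compl_all p_compl => [a b|]; [lia | rewrite all_nseq k_ge2 orbT].
rewrite (funext (fun M' => zetat_trunc_exp R k M' leNM)); apply: coef_cvg_ps_exp => n.
rewrite /zlog /zlog_trunc /dlog; case: eqP => [_|/eqP n_gt0].
  by under eq_fun do rewrite mul0r; exact: coef_cvg_cst.
apply: coef_cvgM; first exact: coef_cvg_cst.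
by apply: coef_cvgC; apply: zeta_trunc_cvg; rewrite /= andbT; nia.
Qed.

Theorem corollary4p2 (R : realType) (k : nat) (hk : (0 < k)%N) :
  (forall N M : nat, (N <= M)%N -> forall w : word,
      lccoef (geom_z k N) w = lccoef (hps_exp_trunc M (logX k) N) w)
  /\
  ((2 <= k)%N -> forall N M : nat, (N <= M)%N ->
      (if N == 0%N then 1 else zetat R (nseq N k)) = ps_exp_trunc M (zlog R k) N).
Proof.
split=> [N M leNM w | k_ge2 N M leNM]; [exact: geom_z_exp | exact: zetat_exp].
Qed.
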